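(* Let $(G,\cdot)$ be a WIPL with identity $e$, let $(H,\circ)$ be a WIPL with identity $e'$, and let $(A,B,C)$ be an isotopism from $(G,\cdot)$ to $(H,\circ)$. Put $a'=eA$ and $b'=eB$. Then $C$ is an isomorphism from $(G,\cdot)$ onto $(H,\circ)$ if and only if $(J_\rho' L_{b'}' J_\lambda',\ J_\lambda' R_{a'}' J_\rho',\ I)\in AUT(H,\circ)$. Moreover, when these equivalent conditions hold, $(J_\lambda' R_{a'}' J_\rho',\ J_\rho' L_{b'}' J_\lambda',\ R_{a'}'L_{b'}')\in AUT(H,\circ)$, and if in addition $y\circ y=e'$ for all $y\in H$, then $(R_{a'}',L_{b'}',R_{a'}'L_{b'}')\in AUT(H,\circ)$.
   Context: Maps are written on the right of their arguments ($xU$) and composed left to right: $UV$ means first apply $U$, then $V$; $I$ is the identity map. For a loop $(L,\cdot)$ with identity $e$, $x^\rho$ and $x^\lambda$ denote the right and left inverses of $x$ ($x x^\rho=e=x^\lambda x$), and $J_\rho:x\mapsto x^\rho$, $J_\lambda:x\mapsto x^\lambda$, $L_x:y\mapsto xy$, $R_x:y\mapsto yx$. For the loop $(H,\circ)$ with identity $e'$ the corresponding maps are denoted $J_\rho'$ ($y\mapsto y^{\rho'}$), $J_\lambda'$ ($y\mapsto y^{\lambda'}$), $L_y':z\mapsto y\circ z$, $R_y':z\mapsto z\circ y$. $L$ is a weak inverse property loop (WIPL) if $xy\cdot z=e$ implies $x\cdot yz=e$ for all $x,y,z\in L$. A triple $(U,V,W)$ of bijections $G\to H$ between loops $(G,\cdot)$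 and $(H,\circ)$ is an isotopism if $xU\circ yV=(x\cdot y)W$ for all $x,y\in G$; an autotopism is an isotopism of a loop to itself, and $AUT(H,\circ)$ denotes the group of autotopisms of $(H,\circ)$ under componentwise composition. *)

From Stdlib Require Import ClassicalEpsilon.
From mathcomp Require Import ssreflect ssrfun.
Set Implicit Arguments.
Unset Strict Implicit.

Definition is_loop (L : Type) (op : L -> L -> L) (e : L) : Prop :=
  (forall x, op e x = x /\ op x e = x) /\
  (forall a b, exists! x, op a x = b) /\
  (forall a b, exists! y, op y a = b).

Definition WIP (L : Type) (op : L -> L -> L) (e : L) : Prop :=
  forall x y z, op (op x y) z = e -> op x (op y z) = e.

Definition is_WIPL (L : Type) (op : L -> L -> L) (e : L) : Prop :=
  is_loop op e /\ WIP op e.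

(* right inverse x^rho : x * x^rho = e ; left inverse x^lambda : x^lambda * x = e *)
Definition rinv (L : Type) (op : L -> L -> L) (e : L) (x : L) : L :=
  epsilon (inhabits x) (fun y => op x y = e).
Definition linv (L : Type) (op : L -> L -> L) (e : L) (x : L) : L :=
  epsilon (inhabits x) (fun y => op y x = e).

Definition isotopism (G H : Type) (opG : G -> G -> G) (opH : H -> H -> H)
  (U V W : G -> H) : Prop :=
  bijective U /\ bijective V /\ bijective W /\
  (forall x y, opH (U x) (V y) = W (opG x y)).

Definition autotopism (H : Type) (op : H -> H -> H) (U V W : H -> H) : Prop :=
  isotopism op op U V W.

Definition isomorphism (G H : Type) (opG : G -> G -> G) (opH : H -> H -> H)
  (C : G -> H) : Prop :=
  bijective C /\ (forall x y, C (opG x y) = opH (C x) (C y)).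

From mathcomp Require Import ssreflect ssrfun.
From Stdlib Require Import ClassicalEpsilon.
Set Implicit Arguments.
Unset Strict Implicit.

(* Since xA o b' = xC = a' o xB, the maps A and B are C followed by the
   inverse translations R_{b'}^{-1} and L_{a'}^{-1}.  In a WIPL these inverse
   translations are J_rho L_{b'} J_lambda and J_lambda R_{a'} J_rho
   (lemmas [rtrans_inverse], [ltrans_inverse]), so C is an isomorphism exactly
   when (R_{b'}^{-1}, L_{a'}^{-1}, I) is an autotopism of H.
   The heart of the file is the section [InverseTranslationAutotopism]: if
   (R_b^{-1}, L_a^{-1}, I) is an autotopism of a WIPL, the weak inverse
   property forces b o a = e, R_b^{-1} = R_a and L_a^{-1} = L_b; hence
   (L_a^{-1}, R_b^{-1}, R_a L_b) is again an autotopism, and when every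
   element squares to e (so a = b) also (R_a, L_b, R_a L_b) is one. *)

Section WIPLoop.
Variables (L : Type) (op : L -> L -> L) (e : L).
Hypothesis hL : is_WIPL op e.

Lemma mul1l x : op e x = x. Proof. by case: hL => [[h _] _]; case: (h x). Qed.
Lemma mul1r x : op x e = x. Proof. by case: hL => [[h _] _]; case: (h x). Qed.

Lemma lcancel a x y : op a x = op a y -> x = y.
Proof.
move=> h; case: hL => [[_ [hl _]] _]; case: (hl a (op a x)) => z [_ hz].
by rewrite -(hz x erefl) -(hz y (esym h)).
Qed.

Lemma rcancel a x y : op x a = op y a -> x = y.
Proof.
move=> h; case: hL => [[_ [_ hr]] _]; case: (hr a (op x a)) => z [_ hz].
by rewrite -(hz x erefl) -(hz y (esym h)).
Qed.

Lemma ldiv_exists a b : exists y, op a y = b.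
Proof. by case: hL => [[_ [hl _]] _]; case: (hl a b) => y [h _]; exists y. Qed.

Lemma rdiv_exists a b : exists y, op y a = b.
Proof. by case: hL => [[_ [_ hr]] _]; case: (hr a b) => y [h _]; exists y. Qed.

Lemma wipA x y z : op (op x y) z = e -> op x (op y z) = e.
Proof. by case: hL => _; apply. Qed.

Lemma wipA' x y z : op x (op y z) = e -> op (op x y) z = e.
Proof.
move=> h; have [w hw] := ldiv_exists (op x y) e.
have : op y w = op y z by apply: (@lcancel x); rewrite (wipA hw) h.
by move/lcancel <-.
Qed.

Lemma rinvP x : op x (rinv op e x) = e.
Proof. exact: (epsilon_spec (inhabits x) (fun y => op x y = e) (ldiv_exists x e)). Qed.

Lemma linvP x : op (linv op e x) x = e.
Proof. exact: (epsilon_spec (inhabits x) (fun y => op y x = e) (rdiv_exists x e)). Qed.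

Lemma rtrans_inverse b y : op (linv op e (op b (rinv op e y))) b = y.
Proof.
apply: (@rcancel (rinv op e y)).
by rewrite (wipA' (linvP (op b (rinv op e y)))) rinvP.
Qed.

Lemma ltrans_inverse a y : op a (rinv op e (op (linv op e y) a)) = y.
Proof.
apply: (@lcancel (linv op e y)).
by rewrite (wipA (rinvP (op (linv op e y) a))) linvP.
Qed.

Section InverseTranslationAutotopism.
Variables (U V : L -> L) (a b : L).
Hypothesis hU : forall y, op (U y) b = y.
Hypothesis hV : forall y, op a (V y) = y.

Lemma UK y : U (op y b) = y.
Proof. by apply: (@rcancel b); rewrite hU. Qed.

Lemma VK y : V (op a y) = y.
Proof. by apply: (@lcancel a); rewrite hV. Qed.

Hypothesis hUV : forall x y, op (U x) (V y) = op x y.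

Lemma Ub : U b = e. Proof. by apply: (@rcancel b); rewrite hU mul1l. Qed.
Lemma Va : V a = e. Proof. by apply: (@lcancel a); rewrite hV mul1r. Qed.

Lemma mul_ba : op b a = e.
Proof. by rewrite -hUV Ub Va mul1l. Qed.

(* V commutes with right multiplication: with p o (q o w) = e, both
   (pU)((qV)w) = e and (pU)((qw)V) = e follow by WIP, using pU = p o a. *)
Lemma V_mulr q w : op (V q) w = V (op q w).
Proof.
have [p hp] := rdiv_exists (op q w) e.
have hpq : op (U p) (op (V q) w) = e by apply: wipA; rewrite hUV wipA'.
have hpV : op (U p) (V (op q w)) = e.
  have hpa : op p a = U p by rewrite -hUV Va mul1r.
  by rewrite -hpa; apply: wipA'; rewrite hV.
by apply: (@lcancel (U p)); rewrite hpq hpV.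
Qed.

Lemma U_mull x y : op x (U y) = U (op x y).
Proof.
have [p hp] := ldiv_exists (op x y) e.
have hyp : op (op x (U y)) (V p) = e by apply: wipA'; rewrite hUV wipA.
have hUp : op (U (op x y)) (V p) = e.
  have hbp : op b p = V p by rewrite -hUV Ub mul1l.
  by rewrite -hbp; apply: wipA; rewrite hU.
by apply: (@rcancel (V p)); rewrite hyp hUp.
Qed.

Lemma V_is_ltrans z : V z = op b z.
Proof.
have Ve : V e = b by apply: (@rcancel a); rewrite V_mulr mul1l Va mul_ba.
by rewrite -Ve V_mulr mul1l.
Qed.

Lemma U_is_rtrans z : U z = op z a.
Proof.
have Ue : U e = a by apply: (@lcancel b); rewrite U_mull mul1r Ub mul_ba.
by rewrite -Ue U_mull mul1r.
Qed.

Lemma swapped_autotopism : autotopism op V U (fun y => op b (op y a)).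
Proof.
split; first by exists (op a) => x; [apply: hV | apply: VK].
split; first by exists (fun y => op y b) => x; [apply: hU | apply: UK].
split.
  exists (fun y => op (op a y) b) => x.
    by rewrite -U_is_rtrans -V_is_ltrans hV hU.
  by rewrite -U_is_rtrans UK -V_is_ltrans VK.
by move=> x y; rewrite V_mulr U_mull V_is_ltrans U_is_rtrans.
Qed.

(* If every element squares to e, then a = b (as b o a = e = a o a), and
   b o (z o a) = z for z = xy by WIP applied to (z o a) o (z o a) = e;
   so (R_a, L_b, R_a L_b) is an autotopism. *)
Lemma translation_autotopism : (forall y, op y y = e) ->
  autotopism op (fun y => op y a) (op b) (fun y => op b (op y a)).
Proof.
move=> hsq.
have eab : b = a by apply: (@rcancel a); rewrite mul_ba hsq.
split; first by exists (fun y => op y b) => x;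
  rewrite -U_is_rtrans ?hU ?UK.
split; first by exists (op a) => x; rewrite -V_is_ltrans ?hV ?VK.
split; first by case: swapped_autotopism => _ [_ []].
move=> x y; rewrite -U_is_rtrans -V_is_ltrans hUV eab.
apply: (@lcancel (op x y)).
by rewrite (wipA (hsq (op (op x y) a))) hsq.
Qed.

End InverseTranslationAutotopism.
End WIPLoop.

Section Isotopism.
Variables (G H : Type) (opG : G -> G -> G) (e : G) (opH : H -> H -> H) (e' : H).
Variables (A B C : G -> H).
Hypotheses (hG : is_WIPL opG e) (hH : is_WIPL opH e').
Hypothesis hABC : forall x y, opH (A x) (B y) = C (opG x y).

Lemma isotopism_rtrans x : opH (A x) (B e) = C x.
Proof. by rewrite hABC (mul1r hG). Qed.

Lemma isotopism_ltrans x : opH (A e) (B x) = C x.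
Proof. by rewrite hABC (mul1l hG). Qed.

Lemma isomorphism_iff_autotopism (U V : H -> H) :
  bijective C ->
  (forall y, opH (U y) (B e) = y) -> (forall y, opH (A e) (V y) = y) ->
  isomorphism opG opH C <-> autotopism opH U V (fun y => y).
Proof.
move=> [Ci CK CiK] hU hV.
have UC p : U (C p) = A p.
  by apply: (@rcancel _ _ _ hH (B e)); rewrite hU isotopism_rtrans.
have VC p : V (C p) = B p.
  by apply: (@lcancel _ _ _ hH (A e)); rewrite hV isotopism_ltrans.
split.
- case=> _ isoC.
  split; first by exists (fun y => opH y (B e)) => x; [apply: hU | apply: (UK hH hU)].
  split; first by exists (opH (A e)) => x; [apply: hV | apply: (VK hH hV)].
  split; first by exists id.
  by move=> x y; rewrite -(CiK x) -(CiK y) UC VC hABC isoC.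
- case=> _ [_ [_ hUV]]; split; first by exists Ci.
  by move=> p q; rewrite -hABC -UC -VC hUV.
Qed.

End Isotopism.

(* Maps are composed left to right in the paper: "U V" = first U then V,
   i.e. the Rocq function (fun y => V (U y)). *)
Theorem mainTheorem3 (G H : Type) (opG : G -> G -> G) (e : G)
  (opH : H -> H -> H) (e' : H) (A B C : G -> H) :
  is_WIPL opG e -> is_WIPL opH e' ->
  isotopism opG opH A B C ->
  let a' := A e in
  let b' := B e in
  let Jr := rinv opH e' in
  let Jl := linv opH e' in
  (isomorphism opG opH C <->
     autotopism opH (fun y => Jl (opH b' (Jr y)))
                    (fun y => Jr (opH (Jl y) a'))
                    (fun y => y)) /\
  (isomorphism opG opH C ->
     autotopism opH (fun y => Jr (opH (Jl y) a'))
                    (fun y => Jl (opH b' (Jr y)))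
                    (fun y => opH b' (opH y a')) /\
     ((forall y, opH y y = e') ->
        autotopism opH (fun y => opH y a') (fun y => opH b' y)
                       (fun y => opH b' (opH y a')))).
Proof.
move=> hG hH [_ [_ [bC hABC]]] a' b' Jr Jl.
have hU y : opH (Jl (opH b' (Jr y))) b' = y by apply: rtrans_inverse.
have hV y : opH a' (Jr (opH (Jl y) a')) = y by apply: ltrans_inverse.
have iso_iff := isomorphism_iff_autotopism hG hH hABC bC hU hV.
split; first exact: iso_iff.
move=> /iso_iff [_ [_ [_ hUV]]].
split; first exact: (swapped_autotopism hH hU hV hUV).
exact: (translation_autotopism hH hU hV hUV).
Qed.
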